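(* Let $a>0$, $C>0$, $a'\in\mathbb{R}$, $b=2a'C^2$, $\omega=a^2/4$, $\alpha=a+b/2$, $\beta=b/2$, let $k_\pm(\lambda)=\sqrt{-\omega\mp i\lambda}$ be the branches analytic on $\mathbb{C}\setminus\mathcal{C}_\pm$ with $\operatorname{Im}k_\pm>0$ there, where $\mathcal{C}_+=[i\omega,i\infty)$, $\mathcal{C}_-=(-i\infty,-i\omega]$, and let $$ D(\lambda)=\alpha^2+2i\alpha(k_++k_-)-4k_+k_--\beta^2. $$ Let $\gamma_2=a'C^2$ and $\lambda_2=i\frac{\gamma_2}{2}\sqrt{4\omega-\gamma_2^2}$. Then: (i) if $a'\in(-\infty,a/(\sqrt2C^2))$, the only zero of $D$ is $\lambda=0$, with multiplicity $2$; (ii) if $a'\in[a/(\sqrt2C^2),a/C^2)$, the zeros of $D$ are $\lambda=0$ (multiplicity two) and the two purely imaginary numbers $\pm i|\lambda_2|$; (iii) if $a'=a/C^2$, the only zero of $D$ is $\lambda=0$, with multiplicity $4$; (iv) if $a'\in(a/C^2,+\infty)$, the zeros of $D$ are $\lambda=0$ (multiplicity two) and the two real numbers $\pm|\lambda_2|$; in particular there is a positive zero.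
   Context: Here $a=a(C^2)$, $a'=a'(C^2)$ for the nonlinearity $F(\psi)=a(|\psi|^2)\psi$; $D(\lambda)$ is the determinant whose zeros in $\mathbb{C}\setminus(\mathcal{C}_+\cup\mathcal{C}_-)$ are the poles of the resolvent of the linearization at the solitary wave $Ce^{-\sqrt\omega|x|}$. *)

From HB Require Import structures.
From mathcomp Require Import all_boot all_order all_algebra.
From mathcomp Require Export complex.
From mathcomp Require Import all_classical all_reals all_analysis.
Import Order.TTheory GRing.Theory Num.Theory.
Import numFieldNormedType.Exports.
Set Implicit Arguments. Unset Strict Implicit. Unset Printing Implicit Defensive.
Local Open Scope ring_scope.
Local Open Scope complex_scope.

Section Defs.
Variable R : realType.

Definition omega (a : R) : R := a ^+ 2 / 4%:R.

(* k_+(lam) = sqrt(-omega - i lam), branch with Im k_+ > 0 on C \ C_+,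
   written via the principal square root sqrtc (Re >= 0, cut along (-oo,0]):
   k_+(lam) = i * sqrtc(omega + i lam).  It is continuous up to the branch
   point i*omega where it vanishes. *)
Definition kplus (a : R) (lam : R[i]) : R[i] := 'i * sqrtc ((omega a)%:C + 'i * lam).
Definition kminus (a : R) (lam : R[i]) : R[i] := 'i * sqrtc ((omega a)%:C - 'i * lam).

Definition bb (C a' : R) : R := 2%:R * a' * C ^+ 2.
Definition alpha (a C a' : R) : R := a + bb C a' / 2%:R.
Definition beta (C a' : R) : R := bb C a' / 2%:R.

Definition Ddet (a C a' : R) (lam : R[i]) : R[i] :=
  (alpha a C a')%:C ^+ 2 + 2%:R * 'i * (alpha a C a')%:C * (kplus a lam + kminus a lam)
  - 4%:R * kplus a lam * kminus a lam - (beta C a')%:C ^+ 2.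

(* Domain: C minus the cuts C_+ = [i omega, i oo), C_- = (-i oo, -i omega],
   where the two branch points +-i omega are kept (D extends continuously
   there). *)
Definition in_domain (a : R) (lam : R[i]) : Prop :=
  ~ (complex.Re lam = 0 /\ omega a < `|complex.Im lam|).

Definition gamma2 (C a' : R) : R := a' * C ^+ 2.
Definition lambda2 (a C a' : R) : R[i] :=
  'i * ((gamma2 C a') / 2%:R)%:C
     * sqrtc ((4%:R * omega a - gamma2 C a' ^+ 2)%:C).

Definition holo_near (g : R[i] -> R[i]) (z : R[i]) : Prop :=
  \forall w \near (z : R[i]^o), derivable (g : R[i]^o -> R[i]^o) w 1.

Definition zero_of_mult (f : R[i] -> R[i]) (z0 : R[i]) (m : nat) : Prop :=
  exists g : R[i] -> R[i],
    [/\ holo_near g z0, g z0 != 0 &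
        \forall w \near (z0 : R[i]^o), f w = (w - z0) ^+ m * g w].

End Defs.

From HB Require Import structures.
From mathcomp Require Import all_boot all_order all_algebra.
From mathcomp Require Import complex.
From mathcomp Require Import all_classical all_reals all_analysis.
From mathcomp Require Import ring lra.
Import Order.TTheory GRing.Theory Num.Theory.
Import numFieldNormedType.Exports.
Local Open Scope ring_scope.
Local Open Scope complex_scope.
Local Open Scope classical_set_scope.

(* Write s = sqrtc (omega + i lam) and t = sqrtc (omega - i lam), so that k_+ = i s and
   k_- = i t.  As s^2 + t^2 = a^2/2, the determinant factors as
   D = 2 (s + t - a) (s + t - gamma_2), and (s + t - a) (s + a/2) (t + a/2) (s + t) = 2 lam^2.
   So the first factor vanishes only at lam = 0, to second order; D vanishes there to order 2,
   or 4 when gamma_2 = a and both factors coincide.  On the second factor, d = s - t satisfies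
   d^2 = a^2 - gamma_2^2 and d gamma_2 = 2 i lam, hence lam = -+ lambda_2, and Re s, Re t >= 0
   force sqrt (a^2 - gamma_2^2) <= gamma_2, i.e. a <= sqrt 2 gamma_2.  Conversely, under this
   condition both +- lambda_2 are zeros, with s, t = (gamma_2 -+ sqrtc (a^2 - gamma_2^2)) / 2. *)

Section ComplexSqrt.
Context {R : rcfType}.
Implicit Types (z x : R[i]) (c : R).

Lemma realC_half c : c%:C = 2 * (c / 2)%:C :> R[i].
Proof. by rewrite -(rmorph_nat (real_complex R)) -rmorphM; congr _%:C; field. Qed.

Lemma sqrt2_ge1 : 1 <= Num.sqrt 2 :> R.
Proof. by rewrite -[X in X <= _]sqrtr1 ler_sqrt ?ler1n. Qed.

Lemma Re_sqrtc_ge0 z : 0 <= complex.Re (sqrtc z).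
Proof. by case: z => x y; rewrite /sqrtc /= sqrtr_ge0. Qed.

(* [Num.sqrt] vanishes on negative numbers, so one of the two parts is 0. *)
Lemma sqrtc_real c : sqrtc c%:C = Num.sqrt c +i* Num.sqrt (- c).
Proof.
rewrite /sqrtc /= eqxx mul1r expr0n /= addr0 sqrtr_sqr.
have [c0|c0] := lerP 0 c.
  rewrite ger0_norm // subrr mul0r sqrtr0 (ler0_sqrtr (_ : - c <= 0)) ?oppr_le0 //.
  by congr (_ +i* _); congr Num.sqrt; field.
rewrite ltr0_norm // addNr mul0r sqrtr0 (ler0_sqrtr (ltW c0)).
by congr (_ +i* _); congr Num.sqrt; field.
Qed.

Lemma sqrtc_unique z x : x ^+ 2 = z -> 0 < complex.Re x -> sqrtc z = x.
Proof.
move=> <- Rex; have /eqP := sqr_sqrtc (x ^+ 2); rewrite eqf_sqr => /orP[/eqP //|/eqP sN].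
by have := Re_sqrtc_ge0 (x ^+ 2); rewrite sN raddfN /= oppr_ge0 leNgt Rex.
Qed.

Lemma sqrtc_sqr x : 0 <= complex.Re x -> (complex.Re x = 0 -> 0 <= complex.Im x) ->
  sqrtc (x ^+ 2) = x.
Proof.
move=> Rx_ge0 Im_ge0; have [Rx_gt0|Rx_le0] := ltrP 0 (complex.Re x).
  exact: sqrtc_unique.
have Rx0 : complex.Re x = 0 by apply/le_anti; rewrite Rx_le0 Rx_ge0.
have {Rx_le0 Rx_ge0} := Im_ge0 Rx0; case: x Rx0 {Im_ge0} => u v u0 v_ge0.
have -> : u = 0 := u0.
have -> : (0 +i* v) ^+ 2 = (- v ^+ 2)%:C by rewrite expr2; simpc.
by rewrite sqrtc_real opprK sqrtr_sqr ger0_norm // ler0_sqrtr // oppr_le0 sqr_ge0.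
Qed.

Lemma subr_sqrtc z1 z2 : z1 - z2 = (sqrtc z1 - sqrtc z2) * (sqrtc z1 + sqrtc z2).
Proof. by rewrite -subr_sqr !sqr_sqrtc. Qed.

Lemma Re_sqrtc_gt0 z : 0 < complex.Re z -> 0 < complex.Re (sqrtc z).
Proof.
case: z => u v /= u0; rewrite sqrtr_gt0 pmulr_lgt0 ?invr_gt0 ?ltr0n //.
by apply: ltr_pwDr => //; exact: sqrtr_ge0.
Qed.

Lemma sqrtrMN c : Num.sqrt c * Num.sqrt (- c) = 0.
Proof.
have [c_ge0|c_lt0] := lerP 0 c; first by rewrite (ler0_sqrtr (_ : - c <= 0)) ?mulr0 ?oppr_le0.
by rewrite ler0_sqrtr ?mul0r // ltW.
Qed.

Lemma sqr_sqrtr_subN c : Num.sqrt c ^+ 2 - Num.sqrt (- c) ^+ 2 = c.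
Proof.
have [c_ge0|c_lt0] := lerP 0 c.
  by rewrite sqr_sqrtr // ler0_sqrtr ?oppr_le0 // expr0n subr0.
by rewrite (ler0_sqrtr (ltW c_lt0)) sqr_sqrtr ?oppr_ge0 ?ltW // expr0n sub0r opprK.
Qed.

Lemma Re_addr_gt0 c z : `|z| < c%:C -> 0 < complex.Re (c%:C + z).
Proof.
move=> z_lt_c; have := le_lt_trans (normc_ge_Re z) z_lt_c.
by rewrite ltcR raddfD /= ltr_norml => /andP[? _]; lra.
Qed.
End ComplexSqrt.

Section ComplexSqrtDerivative.
Context {R : rcfType}.
Implicit Types (z : R[i]).

Lemma sqrtc_dist_le z0 z :
  (complex.Re (sqrtc z0))%:C * `|sqrtc z - sqrtc z0| <= `|z - z0|.
Proof.
have Re_le_norm : (complex.Re (sqrtc z0))%:C <= `|sqrtc z + sqrtc z0|.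
  apply: le_trans (normc_ge_Re _); rewrite lecR raddfD /=.
  by rewrite ger0_norm ?addr_ge0 ?Re_sqrtc_ge0 // lerDr Re_sqrtc_ge0.
by rewrite (subr_sqrtc z z0) normrM mulrC ler_wpM2l.
Qed.

Lemma sqrtc_cvg z0 : 0 < complex.Re (sqrtc z0) ->
  (sqrtc (h + z0) : R[i]^o) @[h --> (0 : R[i]^o)] --> (sqrtc z0 : R[i]^o).
Proof.
move=> rho_gt0; apply/(@cvgrPdist_lt _ _ _ _ (nbhs_filter (0 : R[i]^o))) => e e_gt0.
near=> h; rewrite -(ltr_pM2l (_ : 0 < (complex.Re (sqrtc z0))%:C)) ?ltcR //.
rewrite distrC; apply: le_lt_trans (sqrtc_dist_le z0 (h + z0)) _; rewrite addrK.
by near: h; apply: (@nbhs0_lt _ R[i]^o); rewrite mulr_gt0 ?ltcR.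
Unshelve. all: by end_near. Qed.

Lemma derivable_sqrtc z0 : 0 < complex.Re (sqrtc z0) ->
  derivable (@sqrtc R : R[i]^o -> R[i]^o) z0 1.
Proof.
move=> rho_gt0.
have sum_neq0 z : sqrtc z + sqrtc z0 != 0.
  apply/eqP => /(congr1 (@complex.Re R)); rewrite raddfD /=.
  have := Re_sqrtc_ge0 z; lra.
(* By [subr_sqrtc], the difference quotient at h is 1 / (sqrtc (h + z0) + sqrtc z0). *)
apply/cvg_ex; exists ((sqrtc z0 + sqrtc z0)^-1 : R[i]^o).
apply: cvg_trans; first apply: (@near_eq_cvg _ _ _ _
  (fun h : R[i]^o => (sqrtc (h + z0) + sqrtc z0)^-1 : R[i]^o)).
  near=> h; have h_neq0 : h != 0 by near: h; exact: nbhs_dnbhs_neq.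
  rewrite /= /GRing.scale /= mulr1; apply: (mulIf (sum_neq0 (h + z0))).
  by rewrite -mulrA -subr_sqrtc addrK !mulVf.
apply: (@cvg_within_filter _ _ _ (nbhs (0 : R[i]^o)) _ _ (fun h => h != 0)).
apply: cvgV => //; apply: cvgD; last exact: cvg_cst.
exact: sqrtc_cvg.
Unshelve. all: by end_near. Qed.

Lemma derivable_sqrtc_affine (c k w0 : R[i]) : 0 < complex.Re (sqrtc (c + k * w0)) ->
  derivable (fun w : R[i]^o => sqrtc (c + k * w) : R[i]^o) w0 1.
Proof.
move=> rho_gt0; apply/derivable1_diffP.
have affine : differentiable (fun w : R[i]^o => c + k * w : R[i]^o) (w0 : R[i]^o).
  apply/derivable1_diffP; apply: derivableD; first exact: derivable_cst.
  by apply: derivableM; [exact: derivable_cst | exact: derivable_id].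
apply: (differentiable_comp affine); apply/derivable1_diffP.
exact: derivable_sqrtc.
Qed.
End ComplexSqrtDerivative.

Section Determinant.
Variables (R : realType) (a C a' : R).
Local Notation g := (gamma2 C a').
Local Notation D := (Ddet a C a').
Implicit Types (w : R[i]).

Definition splus w := sqrtc ((omega a)%:C + 'i * w).
Definition sminus w := sqrtc ((omega a)%:C - 'i * w).

Lemma omegaE : (omega a)%:C = (a / 2)%:C ^+ 2 :> R[i].
Proof. by rewrite -rmorphXn /omega; congr _%:C; field. Qed.

Lemma Ddet_factor w : D w = 2 * (splus w + sminus w - a%:C) * (splus w + sminus w - g%:C).
Proof.
have alphaE : (alpha a C a')%:C = a%:C + g%:C.
  by rewrite -rmorphD /alpha /beta /bb /gamma2; congr _%:C; field.
have betaE : (beta C a')%:C = g%:C by rewrite /beta /bb /gamma2; congr _%:C; field.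
rewrite /Ddet /kplus /kminus alphaE betaE -/(splus w) -/(sminus w) (realC_half a).
set s := splus w; set t := sminus w; set h := (a / 2)%:C.
have sum_sqr : s ^+ 2 + t ^+ 2 = 2 * h ^+ 2 by rewrite !sqr_sqrtc omegaE; ring.
apply/eqP; rewrite -subr_eq0; apply/eqP.
transitivity (('i ^+ 2 + 1) * (2 * (2 * h + g%:C) * (s + t) - 4 * s * t)
              - 2 * (s ^+ 2 + t ^+ 2 - 2 * h ^+ 2)); first by ring.
by rewrite sqr_i sum_sqr addNr subrr mul0r mulr0 subrr.
Qed.

Definition denom w := (splus w + (a / 2)%:C) * (sminus w + (a / 2)%:C) * (splus w + sminus w).

Lemma sum_subr_mul_denom w : (splus w + sminus w - a%:C) * denom w = 2 * w ^+ 2.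
Proof.
rewrite /denom (realC_half a); set s := splus w; set t := sminus w; set h := (a / 2)%:C.
have s2 : s ^+ 2 - h ^+ 2 - 'i * w = 0 by rewrite sqr_sqrtc omegaE; ring.
have t2 : t ^+ 2 - h ^+ 2 + 'i * w = 0 by rewrite sqr_sqrtc omegaE; ring.
apply/eqP; rewrite -subr_eq0; apply/eqP.
transitivity ((s ^+ 2 - h ^+ 2 - 'i * w) * ((t + h) * (s + t) - 'i * w)
  + (t ^+ 2 - h ^+ 2 + 'i * w) * ((s + h) * (s + t) + 'i * w)
  - 2 * w ^+ 2 * ('i ^+ 2 + 1)); first by ring.
by rewrite s2 t2 sqr_i addNr !mul0r mulr0 !addr0 subrr.
Qed.

Hypothesis a_gt0 : 0 < a.

Lemma splus0 : splus 0 = (a / 2)%:C.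
Proof. by rewrite /splus mulr0 addr0 omegaE sqrtc_sqr //= divr_ge0 // ltW. Qed.

Lemma sminus0 : sminus 0 = (a / 2)%:C.
Proof. by rewrite /sminus mulr0 subr0 omegaE sqrtc_sqr //= divr_ge0 // ltW. Qed.

Lemma Ddet_eq0_sum w : D w = 0 <-> w = 0 \/ splus w + sminus w = g%:C.
Proof.
split; last first.
  case=> [->|sum_eq]; last by rewrite Ddet_factor sum_eq subrr mulr0.
  by rewrite Ddet_factor splus0 sminus0 (realC_half a); ring.
rewrite Ddet_factor => /eqP; rewrite !mulf_eq0 pnatr_eq0 /= => /orP[] /eqP sum_eq.
  left; have /eqP := sum_subr_mul_denom w.
  by rewrite sum_eq mul0r eq_sym mulf_eq0 pnatr_eq0 expf_eq0 /= => /eqP.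
by right; apply/eqP; rewrite -subr_eq0 sum_eq.
Qed.

Local Notation p := (Num.sqrt (a ^+ 2 - g ^+ 2)).
Local Notation q := (Num.sqrt (g ^+ 2 - a ^+ 2)).

Lemma lambda2E : lambda2 a C a' = 'i * (g / 2)%:C * (p +i* q).
Proof.
rewrite /lambda2 -[g ^+ 2 - _]opprB -sqrtc_real; congr (_ * sqrtc _%:C).
by rewrite /omega; field.
Qed.

Lemma splus_sminus_eq_gamma w : splus w + sminus w = g%:C ->
  p <= g /\ (w = lambda2 a C a' \/ w = - lambda2 a C a').
Proof.
move=> sum_eq; set s := splus w; set t := sminus w.
have Re_sum : complex.Re s + complex.Re t = g.
  by have := congr1 (@complex.Re R) sum_eq; rewrite raddfD.
have := Re_sqrtc_ge0 ((omega a)%:C + 'i * w); have := Re_sqrtc_ge0 ((omega a)%:C - 'i * w).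
rewrite -/(splus w) -/(sminus w) -/s -/t => Rt_ge0 Rs_ge0.
set d := s - t.
have dg : d * g%:C = 2 * 'i * w by rewrite -sum_eq -subr_sqrtc; ring.
have d2 : d ^+ 2 = (p +i* q) ^+ 2.
  transitivity (2 * s ^+ 2 + 2 * t ^+ 2 - (s + t) ^+ 2); first by rewrite /d; ring.
  rewrite sum_eq !sqr_sqrtc -[g ^+ 2 - _]opprB -sqrtc_real sqr_sqrtc omegaE rmorphB !rmorphXn /= (realC_half a); ring.
have w_eq : w = - ('i * (g / 2)%:C * d).
  rewrite (_ : 'i * (g / 2)%:C * d = 'i * (d * g%:C) / 2); last first.
    by rewrite fmorph_div rmorph_nat; ring.
  rewrite dg; apply/eqP; rewrite -subr_eq0; apply/eqP.
  by transitivity (w * ('i ^+ 2 + 1)); [field | rewrite sqr_i addNr mulr0].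
have Re_d : complex.Re d = complex.Re s - complex.Re t by rewrite raddfB.
have /orP[/eqP d_eq|/eqP d_eq] : (d == p +i* q) || (d == - (p +i* q)) by rewrite -eqf_sqr d2.
  split; first by move: Re_d; rewrite d_eq /=; lra.
  by right; rewrite w_eq d_eq lambda2E.
split; first by move: Re_d; rewrite d_eq /=; lra.
by left; rewrite w_eq d_eq lambda2E mulrN opprK.
Qed.

Lemma splus_sminus_lambda2 : 0 < g -> p <= g ->
  splus (lambda2 a C a') + sminus (lambda2 a C a') = g%:C /\
  splus (- lambda2 a C a') + sminus (- lambda2 a C a') = g%:C.
Proof.
move=> g_gt0 p_le_g; have p_ge0 := sqrtr_ge0 (a ^+ 2 - g ^+ 2).
have pq0 := sqrtrMN (a ^+ 2 - g ^+ 2); rewrite opprB in pq0.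
have pq2 := sqr_sqrtr_subN (a ^+ 2 - g ^+ 2); rewrite opprB in pq2.
have q_eq0 : p = g -> q = 0.
  by move=> pg; move/eqP: pq0; rewrite pg mulf_eq0 gt_eqF //= => /eqP.
set x1 : R[i] := ((g - p) / 2) +i* (- q / 2).
set x2 : R[i] := ((g + p) / 2) +i* (q / 2).
have sqrtc_x1 : sqrtc (x1 ^+ 2) = x1.
  apply: sqrtc_sqr => /= [|Re0]; first lra.
  by rewrite q_eq0 ?oppr0 ?mul0r //; lra.
have sqrtc_x2 : sqrtc (x2 ^+ 2) = x2.
  by apply: sqrtc_sqr => /= [|_]; [lra | rewrite divr_ge0 ?sqrtr_ge0].
have [x1_sqr x2_sqr] : x1 ^+ 2 = (omega a)%:C + 'i * lambda2 a C a' /\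
                       x2 ^+ 2 = (omega a)%:C - 'i * lambda2 a C a'.
  by rewrite lambda2E /x1 /x2 /omega !expr2; split; simpc; congr (_ +i* _); nra.
have sum_x : x1 + x2 = g%:C by rewrite /x1 /x2; simpc; congr (_ +i* _); field.
rewrite /splus /sminus mulrN opprK -x1_sqr -x2_sqr sqrtc_x1 sqrtc_x2 sum_x.
by rewrite addrC sum_x.
Qed.

Lemma sqrt_le_gammaE : (p <= g) = (a <= g * Num.sqrt 2).
Proof.
have s2_ge1 : 1 <= Num.sqrt 2 :> R := sqrt2_ge1; have a_pos := a_gt0.
have t2 : (g * Num.sqrt 2) ^+ 2 = 2 * g ^+ 2 by rewrite exprMn sqr_sqrtr // mulrC.
have g_le_t : 0 <= g -> g <= g * Num.sqrt 2 by move=> g_ge0; rewrite ler_peMr.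
have t_sign : 0 < g * Num.sqrt 2 -> 0 < g by rewrite pmulr_lgt0 // (lt_le_trans ltr01).
move: (g * Num.sqrt 2) t2 g_le_t t_sign => t t2 g_le_t t_sign.
have p_ge0 := sqrtr_ge0 (a ^+ 2 - g ^+ 2).
have [c_ge0|c_lt0] := lerP 0 (a ^+ 2 - g ^+ 2).
  have p2 := sqr_sqrtr c_ge0.
  apply/idP/idP => h; nra.
rewrite (ler0_sqrtr (ltW c_lt0)); apply/idP/idP => h; nra.
Qed.

Lemma Ddet_eq0_lambda2 w :
  D w = 0 <-> w = 0 \/ (a <= g * Num.sqrt 2 /\ (w = lambda2 a C a' \/ w = - lambda2 a C a')).
Proof.
rewrite -sqrt_le_gammaE Ddet_eq0_sum; split.
  by case=> [|/splus_sminus_eq_gamma]; [left | right].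
case=> [|[p_le_g w_eq]]; [by left | right].
have g_gt0 : 0 < g.
  have p_ge0 := sqrtr_ge0 (a ^+ 2 - g ^+ 2).
  have [c_gt0|c_le0] := ltrP 0 (a ^+ 2 - g ^+ 2).
    by apply: lt_le_trans p_le_g; rewrite sqrtr_gt0.
  by have := a_gt0; nra.
by have [] := splus_sminus_lambda2 g_gt0 p_le_g; case: w_eq => ->.
Qed.

Lemma lambda2_imag : 0 <= g -> g <= a -> lambda2 a C a' = 'i * `|lambda2 a C a'|.
Proof.
move=> g_ge0 g_le_a; have q0 : q = 0 by rewrite ler0_sqrtr // subr_le0; nra.
have -> : lambda2 a C a' = 'i * (g * p / 2)%:C.
  by rewrite lambda2E q0 complexr0 -mulrA -rmorphM mulrAC.
rewrite normrM normCi mul1r ger0_norm // ler0c.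
by apply: divr_ge0 => //; apply: mulr_ge0 => //; exact: sqrtr_ge0.
Qed.

Lemma lambda2_real : a <= g -> lambda2 a C a' = - (g * q / 2)%:C.
Proof.
move=> a_le_g; have p0 : p = 0 by rewrite ler0_sqrtr // subr_le0; have := a_gt0; nra.
rewrite lambda2E p0; simpc; congr (_ +i* _); ring.
Qed.

Lemma norm_lambda2_real : a <= g -> `|lambda2 a C a'| = (g * q / 2)%:C.
Proof.
move=> a_le_g; rewrite lambda2_real // normrN ger0_norm // ler0c.
by apply: divr_ge0 => //; apply: mulr_ge0; [exact: le_trans (ltW a_gt0) a_le_g | exact: sqrtr_ge0].
Qed.

Lemma Ddet_eq0_only0 w : g * Num.sqrt 2 < a \/ g = a -> D w = 0 <-> w = 0.
Proof.
move=> hg; rewrite Ddet_eq0_lambda2; split; last by left.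
case=> [//|[adm w_eq]]; case: hg => [|g_eq_a]; first by rewrite ltNge adm.
by move: w_eq; rewrite lambda2_real ?g_eq_a // subrr sqrtr0 mulr0 mul0r rmorph0 !oppr0; case.
Qed.

Lemma Ddet_eq0_imag w : a <= g * Num.sqrt 2 -> g <= a ->
  D w = 0 <-> [\/ w = 0, w = 'i * `|lambda2 a C a'| | w = - ('i * `|lambda2 a C a'|)].
Proof.
move=> adm g_le_a.
have g_ge0 : 0 <= g by move: adm; rewrite -sqrt_le_gammaE; apply: le_trans; exact: sqrtr_ge0.
rewrite Ddet_eq0_lambda2 -lambda2_imag //; split.
  by case=> [|[_ []]]; [constructor 1 | constructor 2 | constructor 3].
by case; [left | right; split => //; left | right; split => //; right].
Qed.

Lemma Ddet_eq0_real w : a < g ->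
  D w = 0 <-> [\/ w = 0, w = `|lambda2 a C a'| | w = - `|lambda2 a C a'|].
Proof.
move=> a_lt_g.
have adm : a <= g * Num.sqrt 2.
  rewrite -sqrt_le_gammaE ler0_sqrtr ?subr_le0; first exact: le_trans (ltW a_gt0) (ltW a_lt_g).
  by have := a_gt0; nra.
have l2E : lambda2 a C a' = - `|lambda2 a C a'|.
  by rewrite norm_lambda2_real ?lambda2_real // ltW.
rewrite Ddet_eq0_lambda2; set l := `|lambda2 a C a'|; rewrite l2E opprK; split.
  by case=> [|[_ []]]; [constructor 1 | constructor 3 | constructor 2].
by case; [left | right; split => //; right | right; split => //; left].
Qed.

Lemma Ddet_pos_root : a < g -> exists x : R, 0 < x /\ D x%:C = 0.
Proof.
move=> a_lt_g; exists (g * q / 2); split.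
  have g_gt0 := lt_trans a_gt0 a_lt_g.
  by apply: divr_gt0 => //; apply: mulr_gt0 => //; rewrite sqrtr_gt0; have := a_gt0; nra.
apply/(Ddet_eq0_real _ a_lt_g); constructor 2.
by rewrite norm_lambda2_real // ltW.
Qed.

Lemma Re_gt0_near0 :
  \forall w \near (0 : R[i]^o), 0 < complex.Re (splus w) /\ 0 < complex.Re (sminus w).
Proof.
have omega_gt0 : 0 < (omega a)%:C :> R[i] by rewrite ltcR /omega divr_gt0 ?exprn_gt0.
near=> w; have w_small : `|w| < (omega a)%:C by near: w; exact: (@nbhs0_lt _ R[i]^o).
have norm_iw : `|'i * w| = `|w| by rewrite normrM normCi mul1r.
split; apply: Re_sqrtc_gt0; apply: Re_addr_gt0; by rewrite ?normrN norm_iw.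
Unshelve. all: by end_near. Qed.

Lemma derivable_splus w : 0 < complex.Re (splus w) ->
  derivable (splus : R[i]^o -> R[i]^o) w 1.
Proof. exact: derivable_sqrtc_affine. Qed.

Lemma derivable_sminus w : 0 < complex.Re (sminus w) ->
  derivable (sminus : R[i]^o -> R[i]^o) w 1.
Proof.
have -> : sminus = fun w => sqrtc ((omega a)%:C + - 'i * w).
  by apply/funext => z; rewrite /sminus mulNr.
exact: derivable_sqrtc_affine.
Qed.

Lemma derivable_splus_sminus w : 0 < complex.Re (splus w) -> 0 < complex.Re (sminus w) ->
  derivable (fun w : R[i]^o => splus w + sminus w : R[i]^o) w 1.
Proof.
by move=> Rp Rm; apply: derivableD; [exact: derivable_splus | exact: derivable_sminus].
Qed.

Lemma derivable_denom w : 0 < complex.Re (splus w) -> 0 < complex.Re (sminus w) ->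
  derivable (denom : R[i]^o -> R[i]^o) w 1.
Proof.
move=> Rp Rm; apply: derivableM; last exact: derivable_splus_sminus.
by apply: derivableM; apply: derivableD;
  [exact: derivable_splus | exact: derivable_cst | exact: derivable_sminus | exact: derivable_cst].
Qed.

Lemma denom_neq0 w : 0 < complex.Re (splus w) -> 0 < complex.Re (sminus w) -> denom w != 0.
Proof.
have Re_neq0 (z : R[i]) : 0 < complex.Re z -> z != 0 by apply: contraTneq => ->; rewrite ltxx.
move=> Rp Rm; rewrite !mulf_neq0 // Re_neq0 // raddfD /=.
- by rewrite addr_gt0 // divr_gt0.
- by rewrite addr_gt0 // divr_gt0.
- exact: addr_gt0.
Qed.

Lemma denom0 : denom 0 = a%:C ^+ 3.
Proof. by rewrite /denom splus0 sminus0 (realC_half a); ring. Qed.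

Lemma splus_sminus0 : splus 0 + sminus 0 = a%:C.
Proof. by rewrite splus0 sminus0 (realC_half a); ring. Qed.

Lemma sqr_eq_denom w : w ^+ 2 = (splus w + sminus w - a%:C) * denom w / 2.
Proof. by rewrite sum_subr_mul_denom mulrC mulKf ?pnatr_eq0. Qed.

Lemma Ddet_zero0_mult2 : g != a -> zero_of_mult D 0 2.
Proof.
move=> g_neq_a; exists (fun w => 4 * (splus w + sminus w - g%:C) / denom w); split.
- near=> w; have [Rp Rm] : 0 < complex.Re (splus w) /\ 0 < complex.Re (sminus w).
    by near: w; exact: Re_gt0_near0.
  apply: derivableM; last first.
    by apply: derivableV; [exact: (denom_neq0 w Rp Rm) | exact: (derivable_denom w Rp Rm)].
  apply: derivableM; first exact: (derivable_cst (4 : R[i]^o)).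
  by have := derivableB (derivable_splus_sminus w Rp Rm) (derivable_cst (g%:C : R[i]^o) w 1).
- rewrite splus_sminus0 denom0 -rmorphB !mulf_neq0 ?invr_neq0 ?expf_neq0 ?pnatr_eq0 ?fmorph_eq0 //.
    by rewrite subr_eq0 eq_sym.
  exact: lt0r_neq0.
- near=> w; have [Rp Rm] : 0 < complex.Re (splus w) /\ 0 < complex.Re (sminus w).
    by near: w; exact: Re_gt0_near0.
  have dn := denom_neq0 w Rp Rm; rewrite subr0 Ddet_factor sqr_eq_denom; field.
Unshelve. all: by end_near. Qed.

Lemma Ddet_zero0_mult4 : g = a -> zero_of_mult D 0 4.
Proof.
move=> g_eq_a; exists (fun w => 8 / denom w ^+ 2); split.
- near=> w; have [Rp Rm] : 0 < complex.Re (splus w) /\ 0 < complex.Re (sminus w).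
    by near: w; exact: Re_gt0_near0.
  apply: derivableM; first exact: (derivable_cst (8 : R[i]^o)).
  apply: derivableV; first by rewrite expf_neq0 // (denom_neq0 w Rp Rm).
  by have := @derivableX _ _ _ 2 _ _ (derivable_denom w Rp Rm).
- by rewrite denom0 !mulf_neq0 ?invr_neq0 ?expf_neq0 ?pnatr_eq0 ?fmorph_eq0 // lt0r_neq0.
- near=> w; have [Rp Rm] : 0 < complex.Re (splus w) /\ 0 < complex.Re (sminus w).
    by near: w; exact: Re_gt0_near0.
  have dn := denom_neq0 w Rp Rm.
  by rewrite subr0 (exprM w 2 2) Ddet_factor g_eq_a (sqr_eq_denom w); field.
Unshelve. all: by end_near. Qed.

End Determinant.

Theorem theoremA5 (R : realType) (a C a' : R) (ha : 0 < a) (hC : 0 < C) :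
  let D := Ddet a C a' in
  let l2 := `|lambda2 a C a'| in
  (* (i) *)
  (a' < a / (Num.sqrt 2 * C ^+ 2) ->
     (forall lam, in_domain a lam -> (D lam = 0 <-> lam = 0))
     /\ zero_of_mult D 0 2) /\
  (* (ii) *)
  (a / (Num.sqrt 2 * C ^+ 2) <= a' < a / C ^+ 2 ->
     (forall lam, in_domain a lam ->
        (D lam = 0 <-> [\/ lam = 0, lam = 'i * l2 | lam = - ('i * l2)]))
     /\ zero_of_mult D 0 2) /\
  (* (iii) *)
  (a' = a / C ^+ 2 ->
     (forall lam, in_domain a lam -> (D lam = 0 <-> lam = 0))
     /\ zero_of_mult D 0 4) /\
  (* (iv) *)
  (a / C ^+ 2 < a' ->
     (forall lam, in_domain a lam ->
        (D lam = 0 <-> [\/ lam = 0, lam = l2 | lam = - l2]))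
     /\ zero_of_mult D 0 2
     /\ (exists x : R, 0 < x /\ D x%:C = 0)).
Proof.
move=> D l2; rewrite {}/D {}/l2.
have C2_gt0 : 0 < C ^+ 2 by rewrite exprn_gt0.
have s2C2_gt0 : 0 < Num.sqrt 2 * C ^+ 2 by rewrite mulr_gt0 ?sqrtr_gt0.
have gamma2_sqrt2 : gamma2 C a' * Num.sqrt 2 = a' * (Num.sqrt 2 * C ^+ 2).
  by rewrite /gamma2; ring.
(* The zeros are determined on all of C. *)
split; [|split; [|split]].
- rewrite ltr_pdivlMr // -gamma2_sqrt2 => g_small.
  split=> [lam _|]; first exact: Ddet_eq0_only0 ha lam (or_introl g_small).
  apply: Ddet_zero0_mult2 => //; apply: contraTneq g_small => ->.
  by rewrite -leNgt; apply: ler_peMr; [exact: ltW ha | exact: sqrt2_ge1].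
- rewrite ler_pdivrMr // ltr_pdivlMr // -gamma2_sqrt2 => /andP[g_adm g_lt_a].
  split=> [lam _|]; first exact: Ddet_eq0_imag ha lam g_adm (ltW g_lt_a).
  by apply: Ddet_zero0_mult2 => //; rewrite lt_eqF.
- move=> a'E; have g_eq_a : gamma2 C a' = a by rewrite /gamma2 a'E divfK ?gt_eqF.
  split=> [lam _|]; first exact: Ddet_eq0_only0 ha lam (or_intror g_eq_a).
  exact: Ddet_zero0_mult4 ha g_eq_a.
- rewrite ltr_pdivrMr // => a_lt_g.
  split=> [lam _|]; first exact: Ddet_eq0_real ha lam a_lt_g.
  split; last exact: Ddet_pos_root ha a_lt_g.
  by apply: Ddet_zero0_mult2 => //; rewrite gt_eqF.
Qed.
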